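(* Let $X$ be a real Banach space with $\dim X\ge 2$ and let $\alpha,\beta>0$. Then $$\min\{\alpha,\beta\}\,\mu(X)\le DW_B(X,\alpha,\beta)\le 2\max\{\alpha,\beta\}\,\mu(X).$$
   Context: For $x,y\in X$, $x\perp_B y$ (Birkhoff orthogonality) means $\|x+\lambda y\|\ge\|x\|$ for all $\lambda\in\mathbb R$. For $\alpha,\beta>0$, $$DW_B(X,\alpha,\beta)=\sup\left\{\frac{\alpha\|x\|+\beta\|y\|}{\|x-y\|}\left\|\frac{x}{\|x\|}-\frac{y}{\|y\|}\right\|: x,y\in X\setminus\{0\},\ x\perp_B y\right\}.$$ The rectangular constant is $\mu(X)=\sup\left\{\frac{\|x\|+\|y\|}{\|x+y\|}: x,y\in X\setminus\{0\},\ x\perp_B y\right\}$. *)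

From HB Require Import structures.
From mathcomp Require Import all_boot all_order all_algebra.
From mathcomp Require Import all_classical all_reals all_analysis.
Set Implicit Arguments. Unset Strict Implicit. Unset Printing Implicit Defensive.
Import Order.TTheory GRing.Theory Num.Theory.
Import numFieldNormedType.Exports.
Local Open Scope classical_set_scope.
Local Open Scope ring_scope.

Definition birkhoff_orth (R : realType) (X : normedModType R) (x y : X) : Prop :=
  forall l : R, `|x| <= `|x + l *: y|.

Definition dim_ge2 (R : realType) (X : normedModType R) : Prop :=
  exists x y : X, forall a b : R, a *: x + b *: y = 0 -> a = 0 /\ b = 0.

Definition unitv (R : realType) (X : normedModType R) (x : X) : X := `|x|^-1 *: x.

Definition DW_B (R : realType) (X : normedModType R) (alpha beta : R) : \bar R :=
  ereal_sup [set r | exists x y : X,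
     [/\ x != 0, y != 0, birkhoff_orth x y & r = ((alpha * `|x| + beta * `|y|) / `|x - y|
                  * `|unitv x - unitv y|)%:E]].

Definition rect_const (R : realType) (X : normedModType R) : \bar R :=
  ereal_sup [set r | exists x y : X,
     [/\ x != 0, y != 0, birkhoff_orth x y & r = ((`|x| + `|y|) / `|x + y|)%:E]].

From HB Require Import structures.
From mathcomp Require Import all_boot all_order all_algebra.
From mathcomp Require Import all_classical all_reals all_analysis.
From mathcomp Require Import ring.
Import Order.TTheory GRing.Theory Num.Theory.
Import numFieldNormedType.Exports.
Set Implicit Arguments.
Unset Strict Implicit.
Unset Printing Implicit Defensive.
Local Open Scope ring_scope.

(* If x is Birkhoff orthogonal to y, it is also orthogonal to -y, and the
   substitution y -> -y turns the denominator |x - y| of DW_B into the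
   denominator |x + y| of mu.  Orthogonality gives |x/|x| + y/|y|| >= 1, which
   yields the lower bound; the triangle inequality |x/|x| - y/|y|| <= 2 yields
   the upper bound. *)

Section BirkhoffOrthogonality.
Variables (R : realType) (X : normedModType R).
Implicit Types x y : X.

Lemma birkhoff_orthN x y : birkhoff_orth x y -> birkhoff_orth x (- y).
Proof. by move=> xy l; rewrite scalerN -scaleNr; apply: xy. Qed.

Lemma birkhoff_orth_normB_gt0 x y :
  x != 0 -> birkhoff_orth x y -> 0 < `|x - y|.
Proof.
move=> x0 xy; rewrite normr_gt0; apply/negP => /eqP/subr0_eq exy.
have := xy (-1); rewrite scaleN1r exy subrr normr0.
by rewrite leNgt normr_gt0 -exy x0.
Qed.

Lemma birkhoff_orth_normD_gt0 x y :
  x != 0 -> birkhoff_orth x y -> 0 < `|x + y|.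
Proof.
by move=> x0 /birkhoff_orthN xy; rewrite -[y]opprK birkhoff_orth_normB_gt0.
Qed.

Lemma norm_unitv x : x != 0 -> `|unitv x| = 1.
Proof. by move=> x0; rewrite normrZ normfV normr_id mulVf ?normr_eq0. Qed.

Lemma unitvN x : unitv (- x) = - unitv x.
Proof. by rewrite /unitv normrN scalerN. Qed.

Lemma normB_unitv_le2 x y : x != 0 -> y != 0 -> `|unitv x - unitv y| <= 2.
Proof. by move=> x0 y0; rewrite (le_trans (ler_normB _ _)) ?norm_unitv. Qed.

(* x/|x| + y/|y| = |x|^-1 (x + (|x|/|y|) y), and orthogonality bounds the
   norm of the bracket below by |x|. *)
Lemma birkhoff_orth_normD_unitv_ge1 x y :
  x != 0 -> y != 0 -> birkhoff_orth x y -> 1 <= `|unitv x + unitv y|.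
Proof.
move=> x0 y0 xy; have nx0 : `|x| != 0 by rewrite normr_eq0.
have -> : unitv x + unitv y = `|x|^-1 *: (x + (`|x| / `|y|) *: y).
  by rewrite /unitv scalerDr scalerA mulrA mulVf // mul1r.
rewrite normrZ normfV normr_id -(mulVf nx0).
by rewrite ler_pM2l ?invr_gt0 ?normr_gt0.
Qed.

End BirkhoffOrthogonality.

Section Ratios.
Variables (R : realType) (X : normedModType R) (alpha beta : R).
Hypotheses (alpha_ge0 : 0 <= alpha) (beta_ge0 : 0 <= beta).
Implicit Types x y : X.

Definition dw_ratio x y :=
  (alpha * `|x| + beta * `|y|) / `|x - y| * `|unitv x - unitv y|.

Definition rect_ratio x y := (`|x| + `|y|) / `|x + y|.

Lemma min_rect_ratio_le_dw_ratioN x y :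
  x != 0 -> y != 0 -> birkhoff_orth x y ->
  Num.min alpha beta * rect_ratio x y <= dw_ratio x (- y).
Proof.
move=> x0 y0 xy; rewrite /dw_ratio /rect_ratio normrN opprK unitvN opprK.
have t0 : 0 < `|x + y|^-1 by rewrite invr_gt0 birkhoff_orth_normD_gt0.
have u1 := birkhoff_orth_normD_unitv_ge1 x0 y0 xy.
have mab : Num.min alpha beta * (`|x| + `|y|) <= alpha * `|x| + beta * `|y|.
  by rewrite mulrDr lerD // ler_wpM2r // ge_min lexx ?orbT.
have k0 : 0 <= (alpha * `|x| + beta * `|y|) / `|x + y|.
  by rewrite mulr_ge0 ?addr_ge0 ?mulr_ge0 // ltW.
rewrite mulrA (le_trans (ler_wpM2r (ltW t0) mab)) //.
by rewrite ler_peMr.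
Qed.

Lemma dw_ratio_le_max_rect_ratioN x y :
  x != 0 -> y != 0 -> birkhoff_orth x y ->
  dw_ratio x y <= 2 * Num.max alpha beta * rect_ratio x (- y).
Proof.
move=> x0 y0 xy; rewrite /dw_ratio /rect_ratio normrN.
have t0 : 0 < `|x - y|^-1 by rewrite invr_gt0 birkhoff_orth_normB_gt0.
have abM : alpha * `|x| + beta * `|y| <= Num.max alpha beta * (`|x| + `|y|).
  by rewrite mulrDr lerD // ler_wpM2r // le_max lexx ?orbT.
have M0 : 0 <= Num.max alpha beta * (`|x| + `|y|) / `|x - y|.
  by rewrite mulr_ge0 ?addr_ge0 ?mulr_ge0 ?le_max ?alpha_ge0 // ltW.
have -> : 2 * Num.max alpha beta * ((`|x| + `|y|) / `|x - y|)
          = Num.max alpha beta * (`|x| + `|y|) / `|x - y| * 2.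
  by ring.
apply: (le_trans (ler_wpM2r _ (ler_wpM2r (ltW t0) abM))) => //.
by apply: ler_wpM2l => //; apply: normB_unitv_le2.
Qed.

End Ratios.

Lemma ereal_sup_pZl_le (R : realType) (A B : set \bar R) (k : R) :
  0 < k -> (forall a, A a -> exists2 b, B b & (k%:E * a <= b)%E) ->
  (k%:E * ereal_sup A <= ereal_sup B)%E.
Proof.
move=> k0 AB; rewrite -ereal_sup_pZl //.
by apply/ereal_supP => _ [a Aa <-]; apply: ereal_sup_ge; apply: AB.
Qed.

Lemma ereal_sup_le_pZl (R : realType) (A B : set \bar R) (k : R) :
  0 < k -> (forall a, A a -> exists2 b, B b & (a <= k%:E * b)%E) ->
  (ereal_sup A <= k%:E * ereal_sup B)%E.
Proof.
move=> k0 AB; rewrite -ereal_sup_pZl //; apply/ereal_supP => a /AB[b Bb ab].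
by apply: ereal_sup_ge; exists (k%:E * b)%E => //; exists b.
Qed.

Theorem theorem5 (R : realType) (X : completeNormedModType R) (alpha beta : R) :
  dim_ge2 X -> 0 < alpha -> 0 < beta ->
  ((Num.min alpha beta)%:E * rect_const X <= DW_B X alpha beta)%E /\
  (DW_B X alpha beta <= (2 * Num.max alpha beta)%:E * rect_const X)%E.
Proof.
move=> _ alpha_gt0 beta_gt0.
have [alpha_ge0 beta_ge0] := conj (ltW alpha_gt0) (ltW beta_gt0).
split.
- apply: ereal_sup_pZl_le; first by rewrite lt_min alpha_gt0.
  move=> _ [x [y [x0 y0 xy ->]]].
  exists (dw_ratio alpha beta x (- y))%:E.
    by exists x, (- y); split; rewrite ?oppr_eq0 //; apply: birkhoff_orthN.
  by rewrite -EFinM lee_fin min_rect_ratio_le_dw_ratioN.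
- apply: ereal_sup_le_pZl; first by rewrite mulr_gt0 ?lt_max ?alpha_gt0.
  move=> _ [x [y [x0 y0 xy ->]]].
  exists (rect_ratio x (- y))%:E.
    by exists x, (- y); split; rewrite ?oppr_eq0 //; apply: birkhoff_orthN.
  by rewrite -EFinM lee_fin dw_ratio_le_max_rect_ratioN.
Qed.
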